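(* Let $1\le k\le n$ and $1\le m<n$ be integers. Let $\mathcal{C}=\{d_1,\dots,d_n\}$ be a corpus of $n$ items of which exactly $m$ are designated useful (set $\mathcal{C}^+$) and the remaining $n-m$ non-useful (set $\mathcal{C}^-$). Define $\mathrm{MU}(i)=\mathbb{1}[i\le k]$ for ranks $i\in\{1,\dots,n\}$. Let $\pi$ be any probability distribution over the set $S_n$ of rankings (permutations) of $\mathcal{C}$, and let $\epsilon\in\mathbb{R}^n$ be its expected exposure vector, $\epsilon_d=\sum_{\sigma\in S_n}\pi(\sigma)\,\mathrm{MU}(\bar\sigma_d)$, where $\bar\sigma_d$ is the rank of $d$ in $\sigma$. Define the target exposure vector $\epsilon^*\in\mathbb{R}^n$ by: for useful $d\in\mathcal{C}^+$, $\epsilon^*_d=1$ if $m\le k$ and $\epsilon^*_d=k/m$ if $m>k$; for non-useful $d\in\mathcal{C}^-$, $\epsilon^*_d=\frac{k-m}{n-m}$ if $m\le k$ and $\epsilon^*_d=0$ if $m>k$. Then $$\langle \epsilon,\epsilon^*\rangle\in\big[0,\ \|\epsilon^*\|_2^2\big].$$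
   Context: $\epsilon^*$ is the expected exposure of items under an oracle stochastic retriever that always ranks all useful items above all non-useful items, uniformly at random within each group, under the top-$k$ machine-user browsing model. The quantity $\langle\epsilon,\epsilon^*\rangle$ is called the expected exposure relevance (EE-R) of the policy $\pi$. *)

From mathcomp Require Import all_boot all_order all_algebra all_fingroup.
Set Implicit Arguments. Unset Strict Implicit. Unset Printing Implicit Defensive.
Import Order.TTheory GRing.Theory Num.Theory.
Local Open Scope ring_scope.

(* Items are 'I_n (d_1..d_n as 0..n-1). A ranking sigma : {perm 'I_n} maps an
   item d to its 0-based rank, so the 1-based rank bar-sigma_d is sigma d + 1. *)

Definition MU (R : ringType) (k i : nat) : R := if (i <= k)%N then 1 else 0.

Definition is_distr (R : numDomainType) (n : nat) (pi : {ffun {perm 'I_n} -> R}) :=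
  (forall s, 0 <= pi s) /\ \sum_s pi s = 1.

Definition exposure (R : ringType) (n k : nat) (pi : {ffun {perm 'I_n} -> R})
  (d : 'I_n) : R :=
  \sum_(s : {perm 'I_n}) pi s * MU R k (s d).+1.

Definition target (R : fieldType) (n k : nat) (U : {set 'I_n}) (d : 'I_n) : R :=
  let m := #|U| in
  if d \in U then (if (m <= k)%N then 1 else k%:R / m%:R)
  else (if (m <= k)%N then (k%:R - m%:R) / (n%:R - m%:R) else 0).

Definition dotv (R : ringType) (n : nat) (x y : 'I_n -> R) : R :=
  \sum_(d : 'I_n) x d * y d.

From mathcomp Require Import all_boot all_order all_algebra all_fingroup.
From mathcomp Require Import ring.
Import Order.TTheory GRing.Theory Num.Theory.
Local Open Scope ring_scope.

(* Every expected exposure vector has entries in [0, 1] summing to k, hence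
   puts a mass of at most min(m, k) on the useful items.  The target vector is
   two-level, larger on useful items than on non-useful ones, so its inner
   product with a vector of total mass k is an increasing function of the
   useful mass of that vector.  The target itself has total mass k and useful
   mass exactly min(m, k), so it maximises the inner product, and the maximum
   is its own squared norm. *)

Lemma dotv_ge0 (R : numDomainType) n (x y : 'I_n -> R) :
  (forall d, 0 <= x d) -> (forall d, 0 <= y d) -> 0 <= dotv x y.
Proof. by move=> x0 y0; apply: sumr_ge0 => d _; apply: mulr_ge0. Qed.

Lemma sum_in_le_card (R : numDomainType) n (A : {set 'I_n}) (x : 'I_n -> R) :
  (forall d, x d <= 1) -> \sum_(d in A) x d <= #|A|%:R.
Proof. by move=> x1; rewrite -sumr_const; apply: ler_sum. Qed.

Lemma sum_in_le_sum (R : numDomainType) n (A : {set 'I_n}) (x : 'I_n -> R) :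
  (forall d, 0 <= x d) -> \sum_(d in A) x d <= \sum_d x d.
Proof.
move=> x0; rewrite [leRHS](bigID (mem A)) /= lerDl.
by apply: sumr_ge0 => d _.
Qed.

Lemma card_le_ord n (A : {pred 'I_n}) : (#|A| <= n)%N.
Proof. by rewrite -[n in (_ <= n)%N]card_ord max_card. Qed.

Section TwoLevel.
Variables (R : numDomainType) (n : nat) (U : {set 'I_n}).
Variables (t : 'I_n -> R) (u v : R).
Hypothesis tE : forall d, t d = if d \in U then u else v.

Lemma dotv_two_level (x : 'I_n -> R) :
  dotv x t = v * \sum_d x d + (u - v) * \sum_(d in U) x d.
Proof.
rewrite /dotv [\sum_d x d](bigID (mem U)) [LHS](bigID (mem U)) /=.
under eq_bigr => d dU do rewrite tE dU.
under [X in _ + X]eq_bigr => d dU do rewrite tE (negbTE dU).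
rewrite -!mulr_suml; ring.
Qed.

Lemma ler_dotv_two_level (x y : 'I_n -> R) : v <= u ->
  \sum_d x d = \sum_d y d -> \sum_(d in U) x d <= \sum_(d in U) y d ->
  dotv x t <= dotv y t.
Proof.
move=> vu xy xyU; rewrite !dotv_two_level xy lerD2l.
by rewrite ler_wpM2l // subr_ge0.
Qed.

End TwoLevel.

Arguments ler_dotv_two_level {R n U t u v}.

Lemma MU_ge0 (R : numDomainType) k i : 0 <= MU R k i.
Proof. by rewrite /MU; case: ifP. Qed.

Lemma MU_le1 (R : numDomainType) k i : MU R k i <= 1.
Proof. by rewrite /MU; case: ifP. Qed.

Lemma sum_MU (R : nzRingType) n k :
  (k <= n)%N -> \sum_(i < n) MU R k i.+1 = k%:R.
Proof.
move=> kn; rewrite -(big_mkord xpredT (fun i => MU R k i.+1)).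
rewrite (big_cat_nat (leq0n k) kn) /=.
rewrite (@eq_big_nat _ _ _ 0 k _ (fun=> 1)) => [|i /andP[_ ik]]; last first.
  by rewrite /MU ik.
rewrite (@eq_big_nat _ _ _ k n _ (fun=> 0)) => [|i /andP[ki _]]; last first.
  by rewrite /MU ltnNge ki.
by rewrite !sumr_const_nat subn0 mul0rn addr0.
Qed.

Section Exposure.
Variables (R : numDomainType) (n k : nat) (pi : {ffun {perm 'I_n} -> R}).
Hypothesis pi_distr : is_distr pi.

Lemma exposure_ge0 d : 0 <= exposure k pi d.
Proof.
by apply: sumr_ge0 => s _; apply: mulr_ge0; [case: pi_distr | apply: MU_ge0].
Qed.

Lemma exposure_le1 d : exposure k pi d <= 1.
Proof.
case: pi_distr => pi0 pi1; rewrite -pi1; apply: ler_sum => s _.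
by rewrite -[leRHS]mulr1 ler_wpM2l ?MU_le1.
Qed.

Lemma sum_exposure : (k <= n)%N -> \sum_d exposure k pi d = k%:R.
Proof.
move=> kn; rewrite /exposure exchange_big /=.
under eq_bigr => s _.
  rewrite -mulr_sumr (reindex_inj (@perm_inj _ s^-1)) /=.
  under eq_bigr => i _ do rewrite permKV.
  rewrite sum_MU //.
  over.
by rewrite -mulr_suml; case: pi_distr => _ ->; rewrite mul1r.
Qed.

Lemma sum_exposure_in_le_min (A : {set 'I_n}) : (k <= n)%N ->
  \sum_(d in A) exposure k pi d <= (minn #|A| k)%:R.
Proof.
move=> kn; case: leqP => _.
  exact/sum_in_le_card/exposure_le1.
by rewrite -sum_exposure //; apply/sum_in_le_sum/exposure_ge0.
Qed.

End Exposure.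

Section Target.
Variables (R : realFieldType) (n k : nat) (U : {set 'I_n}).
Hypothesis kn : (k <= n)%N.

Definition target_useful : R := if (#|U| <= k)%N then 1 else k%:R / #|U|%:R.

Definition target_nonuseful : R :=
  if (#|U| <= k)%N then (k%:R - #|U|%:R) / (n%:R - #|U|%:R) else 0.

Lemma targetE d :
  target R k U d = if d \in U then target_useful else target_nonuseful.
Proof. by []. Qed.

Lemma target_nonuseful_ge0 : 0 <= target_nonuseful.
Proof.
rewrite /target_nonuseful; case: leqP => // mk.
by rewrite divr_ge0 // subr_ge0 ler_nat // (leq_trans mk).
Qed.

Lemma target_nonuseful_le_useful : target_nonuseful <= target_useful.
Proof.
rewrite /target_nonuseful /target_useful; case: leqP => [mk|km].
  have [mn|nm] := ltnP #|U| n; last first.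
    have -> : #|U| = n by apply/anti_leq; rewrite nm card_le_ord.
    by rewrite subrr invr0 mulr0.
  by rewrite ler_pdivrMr ?mul1r ?lerD2r ?ler_nat // subr_gt0 ltr_nat.
by rewrite divr_ge0.
Qed.

Lemma target_ge0 d : 0 <= target R k U d.
Proof.
rewrite targetE; case: (d \in U); last exact: target_nonuseful_ge0.
exact: le_trans target_nonuseful_ge0 target_nonuseful_le_useful.
Qed.

Lemma sum_target_in : \sum_(d in U) target R k U d = (minn #|U| k)%:R.
Proof.
under eq_bigr => d dU do rewrite targetE dU.
rewrite sumr_const /target_useful; case: leqP => // km.
rewrite -[LHS]mulr_natr mulfVK // pnatr_eq0 -lt0n.
exact: leq_ltn_trans km.
Qed.

Lemma sum_target : \sum_d target R k U d = k%:R.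
Proof.
rewrite (bigID (mem U)) /= sum_target_in.
under eq_bigr => d dU do rewrite targetE (negbTE dU).
rewrite sumr_const.
have -> : #|(fun d => d \notin U)| = (n - #|U|)%N.
  rewrite -[n in (n - _)%N]card_ord -(cardsC U) addKn.
  by apply: eq_card => d; rewrite inE.
rewrite /target_nonuseful; case: leqP => [mk|km]; last first.
  by rewrite mul0rn addr0.
have [mn|nm] := ltnP #|U| n.
  have nm0 : n%:R - #|U|%:R != 0 :> R by rewrite subr_eq0 eqr_nat gtn_eqF.
  by rewrite -[_ / _ *+ _]mulr_natr natrB ?(ltnW mn) // mulfVK // addrC subrK.
have Un : #|U| = n by apply/anti_leq; rewrite nm card_le_ord.
have -> : k = n by apply/anti_leq; rewrite kn -Un.
by rewrite Un subnn mulr0n addr0.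
Qed.

End Target.

Theorem theorem2 (R : realFieldType) (n k m : nat) (U : {set 'I_n})
  (pi : {ffun {perm 'I_n} -> R}) :
  (1 <= k)%N -> (k <= n)%N -> (1 <= m)%N -> (m < n)%N -> #|U| = m ->
  is_distr pi ->
  0 <= dotv (exposure k pi) (target R k U) /\
  dotv (exposure k pi) (target R k U) <= dotv (target R k U) (target R k U).
Proof.
move=> _ kn _ _ _ pi_distr; split.
  by apply: dotv_ge0 => d; [exact: exposure_ge0 | exact: target_ge0].
apply: (ler_dotv_two_level (targetE R n k U)).
- exact: target_nonuseful_le_useful.
- by rewrite sum_exposure // sum_target.
- by rewrite sum_target_in; exact: sum_exposure_in_le_min.
Qed.
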